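(* Let $S$ be a minimal zero-sum sequence over $\mathbb{Z}$ with $|S|$ finite and $|S|>1$. Suppose $S=S^+\cdot S^-$ where \[S^+=\prod_{i=1}^n a_i^{[x_i]},\qquad S^-=\prod_{j=1}^m (-b_j)^{[y_j]},\] with positive integers $a_1\le \dots\le a_n$, $b_1\le\dots\le b_m$, and positive integers $x_i$ ($i\in[1,n]$), $y_j$ ($j\in[1,m]$). Then \[|S^+|\le \left\lfloor -S^-_{\rm av}\right\rfloor=\left\lfloor \frac{\sum_{j=1}^m b_j y_j}{\sum_{j=1}^m y_j}\right\rfloor \quad\text{and}\quad |S^-|\le \left\lfloor S^+_{\rm av}\right\rfloor=\left\lfloor \frac{\sum_{i=1}^n a_i x_i}{\sum_{i=1}^n x_i}\right\rfloor.\]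
   Context: A sequence over a subset $G_0$ of an abelian group is a finite unordered sequence (multiset) of elements of $G_0$; the product $R\cdot T$ denotes concatenation, and $R$, $T$ are then called subsequences of $R\cdot T$. For $g$ and an integer $d\ge 0$, $g^{[d]}$ denotes the sequence consisting of $d$ copies of $g$. For $S=s_1\cdot\ldots\cdot s_t$: $|S|=t$ is its length, $\sigma(S)=s_1+\dots+s_t$ its sum, and $S_{\rm av}=\sigma(S)/|S|$ its average. $S$ is a zero-sum sequence if $\sigma(S)=0$, and a minimal zero-sum sequence if it is a nontrivial zero-sum sequence containing no proper nontrivial zero-sum subsequence. $[x,y]=\{i\in\mathbb{Z}: x\le i\le y\}$. *)

From mathcomp Require Import all_boot all_order all_algebra.
Set Implicit Arguments. Unset Strict Implicit. Unset Printing Implicit Defensive.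
Import GRing.Theory Num.Theory.
Local Open Scope ring_scope.

(* A sequence over Z is modelled as a list of integers (order irrelevant);
   its subsequences are the sub-multisets, i.e. [mask bs S] for bitmasks bs. *)
Definition seq_sum (S : seq int) : int := \sum_(s <- S) s.

Definition zero_sum (S : seq int) : Prop := seq_sum S = 0.

Definition minimal_zero_sum (S : seq int) : Prop :=
  [/\ S != [::], zero_sum S &
      forall bs : bitseq, zero_sum (mask bs S) ->
        size (mask bs S) = 0%N \/ size (mask bs S) = size S].

Definition seq_prod (k : nat) (c : nat -> int) (d : nat -> nat) : seq int :=
  flatten [seq nseq (d i) (c i) | i <- iota 0 k].

From mathcomp Require Import all_boot all_order all_algebra zify ring.
Set Implicit Arguments. Unset Strict Implicit. Unset Printing Implicit Defensive.
Import Order.TTheory GRing.Theory Num.Theory.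
Local Open Scope ring_scope.

(* Write S^+ = p_1 ... p_u and S^- = -q_1 ... -q_v, so that
   P := p_1 + ... + p_u = q_1 + ... + q_v.  The u v residues modulo P of
   (p_1 + ... + p_k) - (q_1 + ... + q_l), for k < u and l < v, are pairwise
   distinct: a coincidence yields a cyclic block of the p's and one of the q's
   with equal sums, i.e. a zero-sum subsequence of S, which by minimality is
   empty, the p-block never being all of S^+.  Hence
   |S^+| |S^-| <= P = sum a_i x_i = sum b_j y_j, which gives both bounds. *)

Definition prefix_sum (n : nat) (f : nat -> int) (k : nat) : int :=
  \sum_(i < n | (i < k)%N) f i.

Definition cyc_itv (k k' : nat) : pred nat := fun i =>
  if (k <= k')%N then (k <= i < k')%N else (k <= i)%N || (i < k')%N.

Lemma cyc_itvl k k' : cyc_itv k k' k = (k != k').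
Proof. by rewrite /cyc_itv; case: ltngtP; rewrite ?leqnn //=; lia. Qed.

Lemma cyc_itvr k k' : cyc_itv k k' k' = false.
Proof. by rewrite /cyc_itv; case: (leqP k k') => _; apply/negbTE; lia. Qed.

Lemma sum_itv n (f : nat -> int) k k' : (k <= k')%N ->
  \sum_(i < n | (k <= i < k')%N) f i = prefix_sum n f k' - prefix_sum n f k.
Proof.
move=> le_kk'; rewrite /prefix_sum [X in _ = X - _](bigID (fun i : 'I_n => (i < k)%N)) /=.
have -> : \sum_(i < n | (i < k')%N && (i < k)%N) f i = prefix_sum n f k.
  by apply: eq_bigl => i; apply/idP/idP; lia.
rewrite addrC addrK; apply: eq_bigl => i; apply/idP/idP; lia.
Qed.

Lemma sum_cyc_itv n (f : nat -> int) k k' :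
  \sum_(i < n | cyc_itv k k' i) f i =
  prefix_sum n f k' - prefix_sum n f k + (if (k <= k')%N then 0 else \sum_(i < n) f i).
Proof.
rewrite /cyc_itv; case: leqP => [le_kk'|lt_k'k]; first by rewrite addr0 sum_itv.
rewrite [X in _ = _ + X](bigID (fun i : 'I_n => (k <= i)%N || (i < k')%N)) /=.
have -> : \sum_(i < n | ~~ ((k <= i)%N || (i < k')%N)) f i =
          \sum_(i < n | (k' <= i < k)%N) f i.
  by apply: eq_bigl => i; apply/idP/idP; lia.
rewrite sum_itv ?(ltnW lt_k'k) //; ring.
Qed.

Lemma sum_cyc_itv_bound n (f : nat -> int) k k' : (k' < n)%N ->
  (forall i, (i < n)%N -> 0 < f i) ->
  0 <= \sum_(i < n | cyc_itv k k' i) f i < \sum_(i < n) f i.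
Proof.
move=> lt_k'n f_gt0; have f_ge0 (i : 'I_n) : 0 <= f i by exact/ltW/f_gt0.
rewrite sumr_ge0 //= [X in _ < X](bigID (fun i : 'I_n => cyc_itv k k' i)) /= ltrDl.
rewrite (bigD1 (Ordinal lt_k'n)) ?cyc_itvr //=.
by rewrite ltr_pwDl ?f_gt0 ?sumr_ge0.
Qed.

Lemma sum_cyc_itv_mod n (f : nat -> int) d k k' :
  \sum_(i < n) f i = d ->
  (\sum_(i < n | cyc_itv k k' i) f i = prefix_sum n f k' - prefix_sum n f k %[mod d])%Z.
Proof. by move=> sum_f; rewrite sum_cyc_itv sum_f; case: ifP; rewrite ?addr0 ?modzDr. Qed.

Section PrefixResidues.

Variables (u v : nat) (f g : nat -> int).
Hypothesis f_gt0 : forall i, (i < u)%N -> 0 < f i.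
Hypothesis g_gt0 : forall j, (j < v)%N -> 0 < g j.
Let P := \sum_(i < u) f i.
Hypothesis sum_g : \sum_(j < v) g j = P.
Hypothesis balanced_subsums : forall al be : pred nat,
  \sum_(i < u | al i) f i = \sum_(j < v | be j) g j ->
  (forall i, (i < u)%N -> ~~ al i) /\ (forall j, (j < v)%N -> ~~ be j) \/
  (forall i, (i < u)%N -> al i).

(* Equal residues give cyclic intervals of f and of g whose sums agree modulo P,
   hence agree since both lie in [0, P); then both intervals must be empty. *)
Lemma prefix_residue_inj (k k' : 'I_u) (l l' : 'I_v) :
  (prefix_sum u f k - prefix_sum v g l = prefix_sum u f k' - prefix_sum v g l' %[mod P])%Z ->
  k = k' /\ l = l'.
Proof.
move=> /esym/eqP; rewrite eqz_mod_dvd => dvd_P.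
pose A := \sum_(i < u | cyc_itv k k' i) f i.
pose B := \sum_(j < v | cyc_itv l l' j) g j.
have A_bound : 0 <= A < P by exact: sum_cyc_itv_bound (ltn_ord k') f_gt0.
have B_bound : 0 <= B < P by rewrite -sum_g; exact: sum_cyc_itv_bound (ltn_ord l') g_gt0.
have eq_AB : A = B.
  rewrite -(modz_small A_bound) -(modz_small B_bound).
  rewrite (sum_cyc_itv_mod k k' (erefl P)) (sum_cyc_itv_mod l l' sum_g); apply/eqP.
  by rewrite eqz_mod_dvd; congr (_ %| _)%Z: dvd_P; ring.
case: (balanced_subsums eq_AB) => [[noneA noneB] | allA].
  have := noneA _ (ltn_ord k); have := noneB _ (ltn_ord l).
  by rewrite !cyc_itvl !negbK => /eqP/val_inj -> /eqP/val_inj ->.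
by have := allA _ (ltn_ord k'); rewrite cyc_itvr.
Qed.

Lemma mul_size_le_sum : (u * v)%:Z <= P.
Proof.
have [u0|u_gt0] := posnP u; first by rewrite /P u0 big_ord0.
have P_gt0 : 0 < P.
  by rewrite /P (bigD1 (Ordinal u_gt0)) //= ltr_pwDl ?f_gt0 ?sumr_ge0 // => i _; exact/ltW/f_gt0.
pose r (kl : 'I_u * 'I_v) := ((prefix_sum u f kl.1 - prefix_sum v g kl.2) %% P)%Z.
have r_lt (kl : 'I_u * 'I_v) : (absz (r kl) < absz P)%N.
  have := ltz_pmod (prefix_sum u f kl.1 - prefix_sum v g kl.2) P_gt0.
  have := modz_ge0 (prefix_sum u f kl.1 - prefix_sum v g kl.2) (lt0r_neq0 P_gt0).
  rewrite -/(r kl); lia.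
have r_inj : injective (fun kl => Ordinal (r_lt kl)).
  move=> [k l] [k' l'] /(congr1 val) /= eq_r.
  have [-> ->] // : k = k' /\ l = l'.
  apply: prefix_residue_inj; move: eq_r; rewrite /r /=.
  have := modz_ge0 (prefix_sum u f k - prefix_sum v g l) (lt0r_neq0 P_gt0).
  have := modz_ge0 (prefix_sum u f k' - prefix_sum v g l') (lt0r_neq0 P_gt0).
  lia.
have := leq_card _ r_inj; rewrite card_prod !card_ord.
have := ltW P_gt0; lia.
Qed.

End PrefixResidues.

Lemma seq_sum_cat s1 s2 : seq_sum (s1 ++ s2) = seq_sum s1 + seq_sum s2.
Proof. exact: big_cat. Qed.

Lemma seq_sumE (s : seq int) : seq_sum s = \sum_(i < size s) s`_i.
Proof. by rewrite /seq_sum big_tnth; apply: eq_bigr => i _; rewrite (tnth_nth 0). Qed.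

Lemma seq_sum_mask (s : seq int) (al : pred nat) :
  seq_sum (mask (mkseq al (size s)) s) = \sum_(i < size s | al i) s`_i.
Proof.
rewrite /seq_sum big_mask; apply: eq_big => i; first by rewrite nth_mkseq // andbT.
by rewrite (tnth_nth 0).
Qed.

Lemma size_seq_le_sum_pos (s : seq int) : all (fun z => 0 < z) s -> (size s)%:Z <= seq_sum s.
Proof.
elim: s => [|z s IH] /=; first by rewrite /seq_sum big_nil.
by case/andP=> z_gt0 /IH; rewrite /seq_sum big_cons -/(seq_sum s); lia.
Qed.

Lemma seq_sum_le_size_neg (s : seq int) : all (fun z => z < 0) s -> seq_sum s <= - (size s)%:Z.
Proof.
elim: s => [|z s IH] /=; first by rewrite /seq_sum big_nil.
by case/andP=> z_lt0 /IH; rewrite /seq_sum big_cons -/(seq_sum s); lia.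
Qed.

Lemma count_mkseq (p : pred nat) w : count id (mkseq p w) = count p (iota 0 w).
Proof. exact: count_map. Qed.

Lemma count_iota_full (p : pred nat) w :
  count p (iota 0 w) = w -> forall i, (i < w)%N -> p i.
Proof.
move=> cnt i lt_iw; have /allP : all p (iota 0 w) by rewrite all_count cnt size_iota.
by apply; rewrite mem_iota.
Qed.

Lemma count_iota_eq0 (p : pred nat) w :
  count p (iota 0 w) = 0%N -> forall i, (i < w)%N -> ~~ p i.
Proof.
move=> cnt i lt_iw; apply/negP => p_i.
have : has p (iota 0 w) by apply/hasP; exists i; rewrite ?mem_iota.
by rewrite has_count cnt.
Qed.

Lemma minimal_zero_sum_balanced (Sp Sn : seq int) (al be : pred nat) :
  minimal_zero_sum (Sp ++ Sn) ->
  \sum_(i < size Sp | al i) Sp`_i = \sum_(j < size Sn | be j) - Sn`_j ->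
  (forall i, (i < size Sp)%N -> ~~ al i) /\ (forall j, (j < size Sn)%N -> ~~ be j) \/
  (forall i, (i < size Sp)%N -> al i).
Proof.
case=> _ _ /(_ (mkseq al (size Sp) ++ mkseq be (size Sn))).
rewrite mask_cat ?size_mkseq // /zero_sum seq_sum_cat !seq_sum_mask sumrN => minS.
move/eqP; rewrite -subr_eq0 opprK => /eqP/minS.
rewrite size_cat !size_mask ?size_mkseq // !count_mkseq size_cat.
have := count_size al (iota 0 (size Sp)); have := count_size be (iota 0 (size Sn)).
rewrite !size_iota => le_be le_al; case=> [none | all_sel].
  by left; split; apply: count_iota_eq0; lia.
by right; apply: count_iota_full; lia.
Qed.

Lemma minimal_zero_sum_mul_size_le (Sp Sn : seq int) :
  all (fun z => 0 < z) Sp -> all (fun z => z < 0) Sn -> minimal_zero_sum (Sp ++ Sn) ->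
  (size Sp * size Sn)%:Z <= seq_sum Sp.
Proof.
move=> /allP Sp_gt0 /allP Sn_lt0 minS.
have [_ zsS _] := minS; move: zsS; rewrite /zero_sum seq_sum_cat !seq_sumE => zsS.
apply: (@mul_size_le_sum _ _ (nth 0 Sp) (fun j => - Sn`_j)) => [i lt_i | j lt_j | | al be].
- by apply: Sp_gt0; rewrite mem_nth.
- by rewrite oppr_gt0; apply: Sn_lt0; rewrite mem_nth.
- by rewrite sumrN; apply/eqP; rewrite eq_sym -addr_eq0 zsS.
- exact: minimal_zero_sum_balanced.
Qed.

Lemma seq_prodS k (c : nat -> int) d :
  seq_prod k.+1 c d = seq_prod k c d ++ nseq (d k) (c k).
Proof. by rewrite /seq_prod -addn1 iotaD map_cat flatten_cat /= cats0. Qed.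

Lemma size_seq_prod k (c : nat -> int) d : size (seq_prod k c d) = (\sum_(i < k) d i)%N.
Proof.
elim: k => [|k IH]; first by rewrite big_ord0.
by rewrite seq_prodS size_cat size_nseq IH big_ord_recr.
Qed.

Lemma seq_sum_seq_prod k (c : nat -> int) d :
  seq_sum (seq_prod k c d) = \sum_(i < k) c i *+ d i.
Proof.
elim: k => [|k IH]; first by rewrite big_ord0 /seq_sum /seq_prod big_nil.
rewrite seq_prodS seq_sum_cat IH big_ord_recr /=; congr (_ + _).
by rewrite /seq_sum big_nseq; elim: (d k) => //= t ->; rewrite mulrS.
Qed.

Lemma seq_sum_seq_prod_nat k (c d : nat -> nat) :
  seq_sum (seq_prod k (fun i => (c i)%:Z) d) = (\sum_(i < k) c i * d i)%N%:Z.
Proof.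
rewrite seq_sum_seq_prod -natz natr_sum; apply: eq_bigr => i _.
by rewrite natrM mulr_natr natz.
Qed.

Lemma seq_sum_seq_prod_Nnat k (c d : nat -> nat) :
  seq_sum (seq_prod k (fun i => - (c i)%:Z) d) = - (\sum_(i < k) c i * d i)%N%:Z.
Proof.
rewrite seq_sum_seq_prod -seq_sum_seq_prod_nat seq_sum_seq_prod -sumrN.
by apply: eq_bigr => i _; rewrite mulNrn.
Qed.

Lemma all_seq_prod k (c : nat -> int) d (p : pred int) :
  (forall i, (i < k)%N -> p (c i)) -> all p (seq_prod k c d).
Proof.
elim: k => [|k IH] pc //; rewrite seq_prodS all_cat all_nseq pc ?orbT ?andbT //.
by apply: IH => i lt_ik; apply: pc; apply: ltnW.
Qed.

Lemma zero_sum_sign_parts (Sp Sn : seq int) :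
  all (fun z => 0 < z) Sp -> all (fun z => z < 0) Sn ->
  zero_sum (Sp ++ Sn) -> Sp ++ Sn != [::] -> (0 < size Sp)%N /\ (0 < size Sn)%N.
Proof.
move=> Sp_gt0 Sn_lt0; rewrite /zero_sum seq_sum_cat.
have seq_sum_nil : seq_sum [::] = 0 by exact: big_nil.
case: Sp Sp_gt0 => [|p Sp] /size_seq_le_sum_pos /= Sp_ge;
  case: Sn Sn_lt0 => [|q Sn] /seq_sum_le_size_neg /= Sn_le //= zsS _; lia.
Qed.

Theorem theorem1p3 (n m : nat) (a x b y : nat -> nat) (S : seq int) :
  (forall i, (i < n)%N -> (0 < a i)%N) ->
  (forall i j, (i <= j < n)%N -> (a i <= a j)%N) ->
  (forall j, (j < m)%N -> (0 < b j)%N) ->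
  (forall i j, (i <= j < m)%N -> (b i <= b j)%N) ->
  (forall i, (i < n)%N -> (0 < x i)%N) ->
  (forall j, (j < m)%N -> (0 < y j)%N) ->
  S = seq_prod n (fun i => (a i)%:Z) x ++ seq_prod m (fun j => - (b j)%:Z)%R y ->
  minimal_zero_sum S ->
  (1 < size S)%N ->
  (size (seq_prod n (fun i => (a i)%:Z) x)
     <= (\sum_(j < m) b j * y j) %/ (\sum_(j < m) y j))%N /\
  (size (seq_prod m (fun j => - (b j)%:Z)%R y)
     <= (\sum_(i < n) a i * x i) %/ (\sum_(i < n) x i))%N.
Proof.
move=> a_gt0 _ b_gt0 _ _ _ -> minS _.
have Sp_gt0 : all (fun z => 0 < z) (seq_prod n (fun i => (a i)%:Z) x).
  by apply: all_seq_prod => i /a_gt0; rewrite ltz_nat.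
have Sn_lt0 : all (fun z => z < 0) (seq_prod m (fun j => - (b j)%:Z) y).
  by apply: all_seq_prod => j /b_gt0; rewrite oppr_lt0 ltz_nat.
have mul_le := minimal_zero_sum_mul_size_le Sp_gt0 Sn_lt0 minS.
have [S_n0 zsS _] := minS.
have [] := zero_sum_sign_parts Sp_gt0 Sn_lt0 zsS S_n0.
move: mul_le zsS; rewrite /zero_sum seq_sum_cat !size_seq_prod.
rewrite seq_sum_seq_prod_nat seq_sum_seq_prod_Nnat => mul_le zsS X_gt0 Y_gt0.
rewrite !leq_divRL //; lia.
Qed.
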